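(* Let $\mathcal{M}=\mathcal{M}(a,b,c,d,e,f)$ be a Type $\mathcal{A}$ model which is not flat. Then its Ricci tensor $\rho$ is a multiple of $dx^2\otimes dx^2$ if and only if $b=0$ and $d=0$.
   Context: For $(a,b,c,d,e,f)\in\mathbb{R}^6$, the Type $\mathcal{A}$ model $\mathcal{M}(a,b,c,d,e,f)$ is $(\mathbb{R}^2,\nabla)$ with torsion free connection with constant Christoffel symbols ($\nabla_{\partial_{x^i}}\partial_{x^j}=\Gamma_{ij}{}^k\partial_{x^k}$) $\Gamma_{11}{}^1=a$, $\Gamma_{11}{}^2=b$, $\Gamma_{12}{}^1=\Gamma_{21}{}^1=c$, $\Gamma_{12}{}^2=\Gamma_{21}{}^2=d$, $\Gamma_{22}{}^1=e$, $\Gamma_{22}{}^2=f$. Its Ricci tensor is $\rho=\begin{pmatrix}(a-d)d+b(f-c) & cd-be\\ cd-be & c(f-c)+(a-d)e\end{pmatrix}$; the model is flat iff $\rho=0$. *)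

From Stdlib Require Import Reals.
Open Scope R_scope.

Inductive idx : Type := i1 | i2.

(* Ricci tensor of the Type A model M(a,b,c,d,e,f), given by the formula
   of the paper:
     rho = [ (a-d)d + b(f-c)    cd - be          ]
           [ cd - be            c(f-c) + (a-d)e  ] *)
Definition ricci (a b c d e f : R) (i j : idx) : R :=
  match i, j with
  | i1, i1 => (a - d) * d + b * (f - c)
  | i1, i2 => c * d - b * e
  | i2, i1 => c * d - b * e
  | i2, i2 => c * (f - c) + (a - d) * e
  end.

Definition flat (a b c d e f : R) : Prop :=
  forall i j : idx, ricci a b c d e f i j = 0.

Definition dx2dx2 (i j : idx) : R :=
  match i, j with
  | i2, i2 => 1
  | _, _ => 0
  end.

Definition ricci_multiple_dx2dx2 (a b c d e f : R) : Prop :=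
  exists lambda : R, forall i j : idx,
    ricci a b c d e f i j = lambda * dx2dx2 i j.

From Stdlib Require Import Reals.
Open Scope R_scope.

(* Being a multiple of dx^2 (x) dx^2 means rho_11 = rho_12 = 0, and then
   non-flatness forces rho_22 <> 0.  The identities
     b rho_22 = c rho_11 - (a - d) rho_12,   d rho_22 = e rho_11 + (f - c) rho_12
   then give b = d = 0; conversely b = d = 0 kills rho_11 and rho_12. *)

Lemma ricci_multiple_dx2dx2_iff (a b c d e f : R) :
  ricci_multiple_dx2dx2 a b c d e f <->
  ricci a b c d e f i1 i1 = 0 /\ ricci a b c d e f i1 i2 = 0.
Proof.
  split.
  - intros [lambda H].
    rewrite (H i1 i1), (H i1 i2); simpl; split; ring.
  - intros [H11 H12].
    exists (ricci a b c d e f i2 i2).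
    intros [|] [|]; simpl dx2dx2; rewrite ?Rmult_0_r, ?Rmult_1_r; auto.
Qed.

Lemma ricci22_neq0_of_not_flat (a b c d e f : R) :
  ~ flat a b c d e f ->
  ricci a b c d e f i1 i1 = 0 -> ricci a b c d e f i1 i2 = 0 ->
  ricci a b c d e f i2 i2 <> 0.
Proof.
  intros nf H11 H12 H22.
  apply nf; intros [|] [|]; assumption.
Qed.

Lemma ricci22_mul_b (a b c d e f : R) :
  b * ricci a b c d e f i2 i2 =
  c * ricci a b c d e f i1 i1 - (a - d) * ricci a b c d e f i1 i2.
Proof. simpl; ring. Qed.

Lemma ricci22_mul_d (a b c d e f : R) :
  d * ricci a b c d e f i2 i2 =
  e * ricci a b c d e f i1 i1 + (f - c) * ricci a b c d e f i1 i2.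
Proof. simpl; ring. Qed.

Lemma eq0_of_mul_neq0 (x r : R) : r <> 0 -> x * r = 0 -> x = 0.
Proof.
  intros Hr Hxr.
  destruct (Rmult_integral x r Hxr); [assumption | contradiction].
Qed.

Theorem lemma3p1 (a b c d e f : R) :
  ~ flat a b c d e f ->
  (ricci_multiple_dx2dx2 a b c d e f <-> (b = 0 /\ d = 0)).
Proof.
  intro nf.
  rewrite ricci_multiple_dx2dx2_iff.
  split.
  - intros [H11 H12].
    pose proof (ricci22_neq0_of_not_flat a b c d e f nf H11 H12) as H22.
    split; apply (eq0_of_mul_neq0 _ _ H22).
    + rewrite ricci22_mul_b, H11, H12; ring.
    + rewrite ricci22_mul_d, H11, H12; ring.
  - intros [-> ->]; simpl; split; ring.
Qed.
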